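(* Let $F$ be a field and let $V$ be an $F$-vector space of dimension $2m$. If $F$ admits a field extension of degree $m$, then there exists an $m$-dimensional symplectic subspace $K \subset \mathcal{A}(V)$.
   Context: $\mathcal{A}(V)$ denotes the $F$-vector space of alternating bilinear forms on $V$, i.e. bilinear maps $b: V \times V \to F$ with $b(v,v)=0$ for all $v$. A subspace $K \subseteq \mathcal{A}(V)$ is called symplectic if every nonzero element of $K$ is non-degenerate as a bilinear form on $V$. *)

From HB Require Import structures.
From mathcomp Require Import all_boot all_algebra all_field.
Set Implicit Arguments. Unset Strict Implicit. Unset Printing Implicit Defensive.
Import GRing.Theory.
Local Open Scope ring_scope.

Definition bilinear_form (F : fieldType) (V : vectType F) (b : V -> V -> F) : Prop :=
  (forall (a : F) (x y z : V), b (a *: x + y) z = a * b x z + b y z) /\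
  (forall (a : F) (x y z : V), b z (a *: x + y) = a * b z x + b z y).

Definition alternating_form (F : fieldType) (V : vectType F) (b : V -> V -> F) : Prop :=
  bilinear_form b /\ forall v : V, b v v = 0.

Definition nondegenerate (F : fieldType) (V : vectType F) (b : V -> V -> F) : Prop :=
  forall v : V, (forall w : V, b v w = 0) -> v = 0.

Definition zero_form (F : fieldType) (V : vectType F) : V -> V -> F := fun _ _ => 0.

Definition lincomb_forms (F : fieldType) (V : vectType F) (m : nat)
  (c : 'I_m -> F) (b : 'I_m -> V -> V -> F) : V -> V -> F :=
  fun x y => \sum_(i < m) c i * b i x y.

Definition span_forms (F : fieldType) (V : vectType F) (m : nat)
  (b : 'I_m -> V -> V -> F) : (V -> V -> F) -> Prop :=
  fun f => exists c : 'I_m -> F, f = lincomb_forms c b.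

Definition forms_free (F : fieldType) (V : vectType F) (m : nat)
  (b : 'I_m -> V -> V -> F) : Prop :=
  forall c : 'I_m -> F, lincomb_forms c b = @zero_form F V -> forall i, c i = 0.

Definition symplectic (F : fieldType) (V : vectType F) (K : (V -> V -> F) -> Prop) : Prop :=
  forall f, K f -> f <> @zero_form F V -> nondegenerate f.

From Pilot Require Import Defs.
From HB Require Import structures.
From mathcomp Require Import all_boot all_algebra all_field.
From Stdlib Require Import FunctionalExtensionality.
Set Implicit Arguments. Unset Strict Implicit. Unset Printing Implicit Defensive.
Local Open Scope ring_scope.
Import GRing.Theory VectorInternalTheory.

(* Identify V with L * L as F-spaces and fix an F-linear functional phi on L
   with phi 1 <> 0.  For lam in L the form (x, y) |-> phi (lam * det2 x y) is
   alternating and F-linear in lam.  For lam <> 0 it is nondegenerate: if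
   x <> 0, the L-linear map det2 x : L * L -> L is onto, so some y makes
   lam * det2 x y = 1.  Thus lam |-> phi (lam * det2) maps L injectively onto
   an m-dimensional space of forms whose nonzero members are nondegenerate. *)

Section CastVect.

Variables (F : fieldType) (U W : vectType F).
Hypothesis dimUW : dim U = dim W.

Definition castv (u : U) : W := r2v (castmx (erefl 1%N, dimUW) (v2r u)).

Fact castv_is_linear : linear castv.
Proof.
move=> a u v; rewrite /castv -linearP; congr (r2v _); apply/matrixP => i j.
by rewrite !(castmxE, mxE) linearP !mxE.
Qed.
HB.instance Definition _ :=
  GRing.isSemilinear.Build F U W _ castv (GRing.semilinear_linear castv_is_linear).

Lemma castv_bij : bijective castv.
Proof.
exists (fun w => r2v (castmx (erefl 1%N, esym dimUW) (v2r w))) => x.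
  by rewrite /castv r2vK castmx_comp castmx_id v2rK.
by rewrite /castv r2vK castmx_comp castmx_id v2rK.
Qed.

End CastVect.

Lemma coord_vbasis_neq0 (F : fieldType) (vT : vectType F) (U : {vspace vT}) v :
  v \in U -> v != 0 -> exists i, coord (vbasis U) i v != 0.
Proof.
move=> Uv v0; have [i ?|coord0] := pickP (fun i => coord (vbasis U) i v != 0).
  by exists i.
case/eqP: v0; rewrite (coord_vbasis Uv); apply: big1 => i _.
by rewrite (eqP (negbFE (coord0 i))) scale0r.
Qed.

Definition det2 (R : comNzRingType) (u v : R * R) : R := u.1 * v.2 - u.2 * v.1.

Lemma det2_linearl (R : nzRingType) (A : comAlgType R) (a : R) (u v w : A * A) :
  det2 (a *: u + v) w = a *: det2 u w + det2 v w.
Proof. by rewrite /det2 /= !mulrDl -!scalerAl scalerBr opprD addrACA. Qed.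

Lemma det2_linearr (R : nzRingType) (A : comAlgType R) (a : R) (u v w : A * A) :
  det2 w (a *: u + v) = a *: det2 w u + det2 w v.
Proof. by rewrite /det2 /= !mulrDr -!scalerAr scalerBr opprD addrACA. Qed.

Lemma det2_alternating (R : comNzRingType) (u : R * R) : det2 u u = 0.
Proof. by rewrite /det2 mulrC subrr. Qed.

Lemma det2_surjective (K : fieldType) (u : K * K) (z : K) :
  u != 0 -> exists v, det2 u v = z.
Proof.
case: u => [u1 u2] u0; have [u1_0|u1_0] := eqVneq u1 0.
  have u2_0 : u2 != 0 by apply: contraNneq u0 => u2_0; rewrite u1_0 u2_0.
  by exists (- (z / u2), 0); rewrite /det2 /= mulr0 mulrN opprK add0r mulrCA mulfV ?mulr1.
by exists (0, z / u1); rewrite /det2 /= mulr0 subr0 mulrCA mulfV ?mulr1.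
Qed.

Section DetForm.

Variables (F : fieldType) (L : fieldExtType F) (V : vectType F).
Variable f : {linear V -> (L * L)%type}.
Hypothesis f_bij : bijective f.
Variable phi : {scalar L}.
Hypothesis phi1 : phi 1 != 0.

Definition det_form (lam : L) (x y : V) : F := phi (lam * det2 (f x) (f y)).

Lemma det_form_alternating lam : alternating_form (det_form lam).
Proof.
split; last by move=> v; rewrite /det_form det2_alternating mulr0 linear0.
by split=> a x y z; rewrite /det_form linearP (det2_linearl, det2_linearr)
  mulrDr -scalerAr linearP.
Qed.

Lemma lincomb_det_form n (c : 'I_n -> F) (lam : 'I_n -> L) :
  lincomb_forms c (fun i => det_form (lam i)) = det_form (\sum_i c i *: lam i).
Proof.
apply: functional_extensionality => x; apply: functional_extensionality => y.
rewrite /lincomb_forms /det_form mulr_suml linear_sum.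
by apply: eq_bigr => i _; rewrite -scalerAl linearZ.
Qed.

Lemma det_form0 : det_form 0 = @zero_form F V.
Proof.
by apply: functional_extensionality => x; apply: functional_extensionality => y;
  rewrite /det_form mul0r linear0.
Qed.

Lemma det_form_nondegenerate lam : lam != 0 -> Defs.nondegenerate (det_form lam).
Proof.
move=> lam0 v rad_v; have [g _ gK] := f_bij.
apply: (bij_inj f_bij); rewrite linear0; apply/eqP/contraT => fv0.
have [u det_u] := det2_surjective (lam^-1) fv0.
by have := rad_v (g u); rewrite /det_form gK det_u mulfV // => /eqP; rewrite (negPf phi1).
Qed.

Lemma det_form_eq0 lam : det_form lam = @zero_form F V -> lam = 0.
Proof.
move=> form0; apply/eqP; apply: contraT => lam0; have [g _ gK] := f_bij.
have g0 : g (1, 0) = 0.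
  by apply: det_form_nondegenerate lam0 _ _ => w; rewrite form0.
by have := gK (1, 0); rewrite g0 linear0 => -[/eqP]; rewrite eq_sym oner_eq0.
Qed.

End DetForm.

Theorem lemma2p3 (F : fieldType) (V : vectType F) (m : nat)
  (hV : \dim (fullv : {vspace V}) = (2 * m)%N)
  (hext : exists L : fieldExtType F, \dim (fullv : {vspace L}) = m) :
  exists b : 'I_m -> V -> V -> F,
    [/\ forall i, alternating_form (b i),
        forms_free b &
        symplectic (span_forms b)].
Proof.
case: hext => L dimL; subst m.
have dimV : dim V = dim (L * L)%type by rewrite -dimvf hV mul2n -addnn dimvf.
have [i0 phi1] := coord_vbasis_neq0 (memvf (1 : L)) (oner_neq0 L).
pose B := det_form (castv dimV) (coord (vbasis fullv) i0).
have nondeg := det_form_nondegenerate (castv_bij dimV) phi1.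
have B_eq0 := det_form_eq0 (castv_bij dimV) phi1.
exists (fun i => B (vbasis fullv)`_i); split.
- by move=> i; apply: det_form_alternating.
- move=> c; rewrite lincomb_det_form => /B_eq0.
  by have /freeP := basis_free (vbasisP (fullv : {vspace L})); apply.
- move=> _ [c ->]; rewrite lincomb_det_form => B_neq0; apply: nondeg.
  by apply/eqP => sum0; apply: B_neq0; rewrite sum0 det_form0.
Qed.
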